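(* Let $\mathcal F=(F_n)_{n\in\mathbb N}$ be an indexed family. If there are $A,B\in\mathcal F$ with $A\neq B$ and $A\cap B\neq\emptyset$, then $\mathcal F$ is not PRT-learnable.
   Context: An indexed family is a sequence $\mathcal F=(F_n)_{n\in\mathbb N}$ of subsets of $\mathbb N$ that is uniformly computably enumerable (the set $\{\langle a,i\rangle : a\in F_i\}$ is c.e.); a set may occur with several indices, and $F\in\mathcal F$ means $F=F_n$ for some $n$. The minimal index $\mathrm{mi}_{\mathcal F}(F)$ is the least $n$ with $F_n=F$. An enumeration of a nonempty set $A$ is an infinite sequence of elements of $A$ in which every element of $A$ occurs; $f\restriction n$ denotes the initial segment of length $n$. A learner is a partial computable function from finite strings of natural numbers to natural numbers (hypotheses); hypothesis $h$ is interpreted as $F_h$. $M$ converges to a correct index on an enumeration $f$ of $F$ if there is $i$ with $M(f\restriction j)=M(f\restriction i)$ for all $j\ge i$ and $F_{M(f\restriction i)}=F$. $\mathcal F$ is PRT-learnable if there are a learner $M$ and a polynomial $p$ such that for every $F\in\mathcal F$ and every enumeration $f$ of $F$, $M$ converges to a correct index on $f$ in fewer than $p(\mathrm{mi}_{\mathcal F}(F))$ computation steps. *)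

From mathcomp Require Import all_boot.
Set Implicit Arguments. Unset Strict Implicit. Unset Printing Implicit Defensive.

Inductive instr : Type :=
| Inc (r : nat)
| Jzdec (r : nat) (j : nat).

Definition prog := seq instr.

Definition state := (nat * (nat -> nat))%type.

Definition upd (g : nat -> nat) (r v : nat) : nat -> nat :=
  fun k => if k == r then v else g k.

Definition step (P : prog) (s : state) : option state :=
  let: (pc, g) := s in
  match onth P pc with
  | None => None
  | Some (Inc r) => Some (pc.+1, upd g r (g r).+1)
  | Some (Jzdec r j) =>
      if g r == 0 then Some (j, g) else Some (pc.+1, upd g r (g r).-1)
  end.

Fixpoint exec (P : prog) (t : nat) (s : state) : state :=
  match t with
  | 0 => s
  | t'.+1 => match step P s with None => s | Some s' => exec P t' s' end
  end.

Definition halted (P : prog) (s : state) : Prop := step P s = None.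

Definition init (x : nat) : state := (0, fun k => if k == 0 then x else 0).

Definition runs_in (P : prog) (x y t : nat) : Prop :=
  halted P (exec P t (init x)) /\
  (forall t', t' < t -> ~ halted P (exec P t' (init x))) /\
  (exec P t (init x)).2 0 = y.

Definition halts_on (P : prog) (x : nat) : Prop := exists t y, runs_in P x y t.

(* Cantor pairing <a, b> *)
Definition cpair (a b : nat) : nat := ((a + b) * (a + b).+1)./2 + b.

Fixpoint code_seq (s : seq nat) : nat :=
  match s with
  | [::] => 0
  | a :: s' => (cpair a (code_seq s')).+1
  end.

Definition ifamily := nat -> nat -> Prop.   (* F n a  <->  a \in F_n *)

Definition same_set (A B : nat -> Prop) : Prop := forall a, A a <-> B a.

Definition uniformly_ce (F : ifamily) : Prop :=
  exists P : prog, forall a i, F i a <-> halts_on P (cpair a i).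

Definition in_family (F : ifamily) (A : nat -> Prop) : Prop :=
  exists n, same_set (F n) A.

Definition is_min_index (F : ifamily) (A : nat -> Prop) (m : nat) : Prop :=
  same_set (F m) A /\ forall k, k < m -> ~ same_set (F k) A.

Definition enumeration (A : nat -> Prop) (f : nat -> nat) : Prop :=
  (forall k, A (f k)) /\ (forall a, A a -> exists k, f k = a).

Definition init_seg (f : nat -> nat) (n : nat) : seq nat := mkseq f n.

Definition peval (c : seq nat) (n : nat) : nat :=
  \sum_(i < size c) nth 0 c i * n ^ i.

(* Learner M (a machine computing a partial function on coded strings)
   converges on f to a correct index for A (w.r.t. F), and the total number of
   computation steps spent on f|0, ..., f|i (i the convergence point) is
   smaller than [bound]. *)
Definition converges_within (F : ifamily) (M : prog) (A : nat -> Prop)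
    (f : nat -> nat) (bound : nat) : Prop :=
  exists (i h : nat) (T : nat -> nat),
    (forall j, i <= j -> halts_on M (code_seq (init_seg f j)) /\
       forall y t, runs_in M (code_seq (init_seg f j)) y t -> y = h) /\
    same_set (F h) A /\
    (forall j, j <= i -> exists y, runs_in M (code_seq (init_seg f j)) y (T j)) /\
    \sum_(j < i.+1) T j < bound.

Definition PRT_learnable (F : ifamily) : Prop :=
  exists (M : prog) (p : seq nat),
    forall A, in_family F A ->
    forall m, is_min_index F A m ->
    forall f, enumeration A f ->
      converges_within F M A f (peval p m).

(* A learner that converges within p(m) steps has made its final guess after
   reading fewer than p(m) elements of the enumeration, since every call of a
   nonempty program costs at least one step (the empty program echoes its
   input, whose code grows with the segment, so it never converges).
   Enumerations of A and B that both start with p(mA) + p(mB) copies of a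
   common element x are indistinguishable up to that point, so the learner
   settles on the same index for both, forcing A = B. *)
From mathcomp Require Import all_boot.
From Stdlib Require Import Classical ClassicalEpsilon.
From Stdlib Require Wf_nat.

Set Implicit Arguments.
Unset Strict Implicit.

Lemma exec_nil t s : exec [::] t s = s.
Proof. by case: s => [[|pc] g]; case: t. Qed.

Lemma runs_in_nil_0 x : runs_in [::] x x 0.
Proof. by split; [|split]; rewrite ?exec_nil. Qed.

Lemma runs_in0_nil M x y : runs_in M x y 0 -> M = [::].
Proof.
by case: M => // -[r | r j] M [] //; rewrite /halted /=; case: ifP.
Qed.

Lemma cpair_monor a : {homo cpair a : b b' / b < b'}.
Proof.
move=> b b' lt_bb'; rewrite /cpair -addnS leq_add //.
by apply/half_leq/leq_mul; rewrite ?ltnS leq_add2l ltnW.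
Qed.

Lemma code_seq_rcons s a : code_seq s < code_seq (rcons s a).
Proof. by elim: s => //= b s IHs; rewrite ltnS cpair_monor. Qed.

Lemma init_segS f n : init_seg f n.+1 = rcons (init_seg f n) (f n).
Proof. exact: mkseqS. Qed.

Lemma eq_in_init_seg f g n :
  (forall k, k < n -> f k = g k) -> init_seg f n = init_seg g n.
Proof.
move=> eq_fg; apply/eq_in_map => k.
by rewrite mem_iota add0n => /andP[_ /eq_fg].
Qed.

Lemma not_converges_within_nil F A f b : ~ converges_within F [::] A f b.
Proof.
case=> i [h [T [stable _]]].
have out j : i <= j -> code_seq (init_seg f j) = h.
  by move=> le_ij; apply: (stable j le_ij).2 _ _ (runs_in_nil_0 _).
have := code_seq_rcons (init_seg f i) (f i).
by rewrite -init_segS out // out // ltnn.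
Qed.

Lemma converges_within_from_bound F M A f b : M <> [::] ->
  converges_within F M A f b ->
  exists h, same_set (F h) A /\ forall j, b <= j ->
    halts_on M (code_seq (init_seg f j)) /\
    forall y t, runs_in M (code_seq (init_seg f j)) y t -> y = h.
Proof.
move=> M_nil [i [h [T [stable [Fh [runs sumT]]]]]].
exists h; split => // j le_bj; apply: stable.
have T_gt0 (k : 'I_i.+1) : 0 < T k.
  have [y] := runs k (ltn_ord k); case: (T k) => // /runs_in0_nil.
  by move/M_nil.
have : \sum_(k < i.+1) 1 <= \sum_(k < i.+1) T k by apply: leq_sum => k _.
rewrite sum1_card card_ord => le_iT.
by rewrite ltnW // (leq_trans le_iT) // (leq_trans (ltnW sumT)).
Qed.

Lemma exists_min_index F A n : same_set (F n) A -> exists m, is_min_index F A m.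
Proof.
move=> FnA.
have [m [[FmA least] _]] := Wf_nat.dec_inh_nat_subset_has_unique_least_element
  (fun k => same_set (F k) A) (fun k => classic _) (ex_intro _ n FnA).
exists m; split => // k lt_km FkA.
by move: (least k FkA) => /leP; rewrite leqNgt lt_km.
Qed.

Lemma enumeration_with_prefix (A : nat -> Prop) x K : A x ->
  exists f, enumeration A f /\ forall k, k < K -> f k = x.
Proof.
move=> Ax; pose g k := if excluded_middle_informative (A k) then k else x.
have Ag k : A (g k) by rewrite /g; case: excluded_middle_informative.
exists (fun k => if k < K then x else g (k - K)).
split; last by move=> k ->.
split=> [k | a Aa]; first by case: ifP.
exists (a + K); rewrite ltnNge leq_addl addnK /g.
by case: excluded_middle_informative.
Qed.

Theorem proposition3p2 (F : ifamily) :
  uniformly_ce F ->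
  (exists A B, in_family F A /\ in_family F B /\ ~ same_set A B /\
               exists x, A x /\ B x) ->
  ~ PRT_learnable F.
Proof.
move=> _ [A [B [[nA FA] [[nB FB] [neq_AB [x [Ax Bx]]]]]]] [M [p learns]].
have [mA minA] := exists_min_index FA; have [mB minB] := exists_min_index FB.
have learnsA := learns A (ex_intro _ nA FA) mA minA.
have learnsB := learns B (ex_intro _ nB FB) mB minB.
have [M_nil | M_nnil] := classic (M = [::]).
  have [f [enumA _]] := enumeration_with_prefix 0 Ax.
  by apply: (@not_converges_within_nil F A f (peval p mA)); rewrite -M_nil; apply: learnsA.
pose K := peval p mA + peval p mB.
have [fA [enumA prefA]] := enumeration_with_prefix K Ax.
have [fB [enumB prefB]] := enumeration_with_prefix K Bx.
have [hA [FhA stableA]] := converges_within_from_bound M_nnil (learnsA fA enumA).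
have [hB [FhB stableB]] := converges_within_from_bound M_nnil (learnsB fB enumB).
have same_prefix : init_seg fA K = init_seg fB K.
  by apply: eq_in_init_seg => k lt_kK; rewrite prefA ?prefB.
have [[t [y run]] outA] := stableA K (leq_addr _ _).
have [_ outB] := stableB K (leq_addl _ _).
have eq_h : hA = hB.
  by rewrite -(outA _ _ run) (outB y t) // -same_prefix.
by apply: neq_AB => a; rewrite -FhA -FhB eq_h.
Qed.
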